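(* Let $N=N_T+N_I+N_R$ and let $\mathbf{Z}\in\mathbb{C}^{N\times N}$ be invertible, partitioned into blocks indexed by $T,I,R$ of sizes $N_T,N_I,N_R$. Let $\mathbf{Z}_T\in\mathbb{C}^{N_T\times N_T}$ and $\mathbf{Z}_R\in\mathbb{C}^{N_R\times N_R}$ be invertible diagonal matrices and $\mathbf{Z}_I\in\mathbb{C}^{N_I\times N_I}$ invertible, and set $\mathbf{Z}_0=\mathrm{blkdiag}(\mathbf{Z}_T,\mathbf{Z}_I,\mathbf{Z}_R)$. Let $\mathbf{Y}=\mathbf{Z}^{-1}$ (partitioned in the same way into blocks $\mathbf{Y}_{ab}$), $\mathbf{Y}_T=\mathbf{Z}_T^{-1}$, $\mathbf{Y}_I=\mathbf{Z}_I^{-1}$, $\mathbf{Y}_R=\mathbf{Z}_R^{-1}$. Assume $\mathbf{I}+\mathbf{Z}_0\mathbf{Z}^{-1}$ is invertible and that the matrices $\mathbf{Y}_R+\mathbf{Y}_{RR}$ and $\begin{bmatrix}\mathbf{Y}_I+\mathbf{Y}_{II}&\mathbf{Y}_{IR}\\ \mathbf{Y}_{RI}&\mathbf{Y}_R+\mathbf{Y}_{RR}\end{bmatrix}$ are invertible. Let $\widetilde{\mathbf{Z}}=(\mathbf{I}+\mathbf{Z}_0\mathbf{Z}^{-1})^{-1}$ with blocks $\widetilde{\mathbf{Z}}_{ab}$. Then $\widetilde{\mathbf{Z}}_{TT}$ is invertible and $$\widetilde{\mathbf{Z}}_{RT}\widetilde{\mathbf{Z}}_{TT}^{-1}=\left(\mathbf{Y}_R+\mathbf{Y}_{RR}\right)^{-1}\Big(-\mathbf{Y}_{RT}+\mathbf{Y}_{RI}\big(\mathbf{Y}_I+\mathbf{Y}_{II}-\mathbf{Y}_{IR}(\mathbf{Y}_R+\mathbf{Y}_{RR})^{-1}\mathbf{Y}_{RI}\big)^{-1}\big(\mathbf{Y}_{IT}-\mathbf{Y}_{IR}(\mathbf{Y}_R+\mathbf{Y}_{RR})^{-1}\mathbf{Y}_{RT}\big)\Big),$$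 where the inner inverse exists.
   Context: Blocks are indexed by $T$ (first $N_T$ indices), $I$ (next $N_I$), $R$ (last $N_R$); $\mathbf{X}_{ab}$ denotes the $(a,b)$ block of a matrix $\mathbf{X}$. $\widetilde{\mathbf{Z}}_{RT}\widetilde{\mathbf{Z}}_{TT}^{-1}$ is the general physics-consistent RIS-aided MIMO channel matrix (mapping transmit to receive voltages) in multiport network theory. *)

From HB Require Import structures.
From mathcomp Require Import all_boot all_order all_algebra.
From mathcomp Require Import complex.
From mathcomp Require Import reals.
Set Implicit Arguments. Unset Strict Implicit. Unset Printing Implicit Defensive.
Import Order.TTheory GRing.Theory Num.Theory.
Local Open Scope ring_scope.

(* Indices of an N x N matrix with N = NT + NI + NR, blocks T, I, R in order. *)
Definition idxT (NT NI NR : nat) (i : 'I_NT) : 'I_(NT + NI + NR) :=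
  lshift NR (lshift NI i).
Definition idxI (NT NI NR : nat) (i : 'I_NI) : 'I_(NT + NI + NR) :=
  lshift NR (rshift NT i).
Definition idxR (NT NI NR : nat) (i : 'I_NR) : 'I_(NT + NI + NR) :=
  rshift (NT + NI) i.

Definition blk {C : Type} {N ma mb : nat} (fa : 'I_ma -> 'I_N) (fb : 'I_mb -> 'I_N)
  (X : 'M[C]_N) : 'M[C]_(ma, mb) := mxsub fa fb X.

Definition blkdiag3 {C : pzRingType} {NT NI NR : nat}
  (A : 'M[C]_NT) (B : 'M[C]_NI) (D : 'M[C]_NR) : 'M[C]_(NT + NI + NR) :=
  block_mx (block_mx A 0 0 B) 0 0 D.

(** Writing [Y0 = Z0^-1 = blkdiag(Y_T, Y_I, Y_R)], one has
    [I + Z0 Y = Z0 (Y0 + Y)], hence [Zt = W Y0] with [W = (Y0 + Y)^-1], so that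
    the T-block column of [Zt] is the T-block column of [W] times [Y_T] and
    [Zt_RT Zt_TT^-1 = W_RT W_TT^-1].  The T-block column of [W] solves
    [(Y0 + Y) W_{.T} = e_T]; eliminating first the R-block and then the I-block
    unknown (the latter through the Schur complement [M]) expresses [W_RT] and
    [W_IT] as matrices times [W_TT], which gives the formula, and the T-row of
    the same system then exhibits a left inverse of [W_TT]. *)
From mathcomp Require Import all_boot all_order all_algebra.
From mathcomp Require Import complex.
From mathcomp Require Import reals.
Import GRing.Theory.
Local Open Scope ring_scope.

Section ThreeBlocks.
Variable C : comUnitRingType.
Variables NT NI NR : nat.
Local Notation T := (@idxT NT NI NR).
Local Notation I := (@idxI NT NI NR).
Local Notation Rr := (@idxR NT NI NR).
Local Notation N := (NT + NI + NR).

Lemma blkD ma mb (fa : 'I_ma -> 'I_N) (fb : 'I_mb -> 'I_N) (X Y : 'M[C]_N) :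
  blk fa fb (X + Y) = blk fa fb X + blk fa fb Y.
Proof. by apply/matrixP=> i j; rewrite !mxE. Qed.

Lemma blkM ma mb (fa : 'I_ma -> 'I_N) (fb : 'I_mb -> 'I_N) (X Y : 'M[C]_N) :
  blk fa fb (X *m Y) = blk fa T X *m blk T fb Y + blk fa I X *m blk I fb Y
                       + blk fa Rr X *m blk Rr fb Y.
Proof.
apply/matrixP=> i j; rewrite !mxE !big_split_ord /=.
by congr (_ + _ + _); apply: eq_bigr => k _; rewrite !mxE.
Qed.

Variables (a : 'M[C]_NT) (b : 'M[C]_NI) (d : 'M[C]_NR).
Local Notation D := (blkdiag3 a b d).

Ltac blkdiag3_entry :=
  apply/matrixP=> i j; rewrite /blkdiag3 mxE /idxT /idxI /idxR;
  by rewrite ?(block_mxEul, block_mxEur, block_mxEdl, block_mxEdr) ?mxE.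

Lemma blkdiag3_TT : blk T T D = a. Proof. blkdiag3_entry. Qed.
Lemma blkdiag3_IT : blk I T D = 0. Proof. blkdiag3_entry. Qed.
Lemma blkdiag3_RT : blk Rr T D = 0. Proof. blkdiag3_entry. Qed.
Lemma blkdiag3_II : blk I I D = b. Proof. blkdiag3_entry. Qed.
Lemma blkdiag3_IR : blk I Rr D = 0. Proof. blkdiag3_entry. Qed.
Lemma blkdiag3_RI : blk Rr I D = 0. Proof. blkdiag3_entry. Qed.
Lemma blkdiag3_RR : blk Rr Rr D = d. Proof. blkdiag3_entry. Qed.

Lemma blk_mulmx_blkdiag3_T ma (fa : 'I_ma -> 'I_N) (X : 'M[C]_N) :
  blk fa T (X *m D) = blk fa T X *m a.
Proof. by rewrite blkM blkdiag3_TT blkdiag3_IT blkdiag3_RT !mulmx0 !addr0. Qed.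

Lemma blkRT_mulmx_blkdiag3D (Y W : 'M[C]_N) :
  blk Rr T ((D + Y) *m W) = blk Rr T Y *m blk T T W + blk Rr I Y *m blk I T W
                            + (d + blk Rr Rr Y) *m blk Rr T W.
Proof. by rewrite blkM !blkD blkdiag3_RT blkdiag3_RI blkdiag3_RR !add0r. Qed.

Lemma blkIT_mulmx_blkdiag3D (Y W : 'M[C]_N) :
  blk I T ((D + Y) *m W) = blk I T Y *m blk T T W + (b + blk I I Y) *m blk I T W
                           + blk I Rr Y *m blk Rr T W.
Proof. by rewrite blkM !blkD blkdiag3_IT blkdiag3_II blkdiag3_IR !add0r. Qed.

Lemma blkdiag3_1 : blkdiag3 1%:M 1%:M 1%:M = 1%:M :> 'M[C]_N.
Proof. by rewrite /blkdiag3 -!scalar_mx_block. Qed.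

End ThreeBlocks.

Section UnitMatrices.
Variable C : comUnitRingType.

Lemma invmxM n (A B : 'M[C]_n) :
  A \in unitmx -> B \in unitmx -> invmx (A *m B) = invmx B *m invmx A.
Proof.
move=> uA uB; have uAB : A *m B \in unitmx by rewrite unitmx_mul uA uB.
apply: (can_inj (mulKmx uAB)); rewrite mulmxV // mulmxA.
by rewrite mulmxK // mulmxV.
Qed.

Lemma schur_complement_unitmx n1 n2 (a : 'M[C]_n1) b c (d : 'M[C]_n2) :
  d \in unitmx -> block_mx a b c d \in unitmx -> a - b *m invmx d *m c \in unitmx.
Proof.
move=> ud; set s := a - _.
have -> : block_mx a b c d
          = block_mx 1%:M (b *m invmx d) 0 1%:M *m block_mx s 0 c d.
  rewrite mulmx_block !(mul1mx, mul0mx, mulmx0, addr0, add0r) mulmxKV //.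
  by rewrite /s -mulmxA subrK.
rewrite unitmx_mul => /andP[_].
by rewrite unitmxE det_lblock unitrM -unitmxE => /andP[].
Qed.

End UnitMatrices.

Section BlockElimination.
Context {C : comUnitRingType} {pT pI pR m : nat}.
Context {aRT : 'M[C]_(pR, pT)} {aRI : 'M[C]_(pR, pI)} {aRR : 'M[C]_pR}.
Context {aIT : 'M[C]_(pI, pT)} {aII : 'M[C]_pI} {aIR : 'M[C]_(pI, pR)}.
Context {wT : 'M[C]_(pT, m)} {wI : 'M[C]_(pI, m)} {wR : 'M[C]_(pR, m)}.
Hypothesis eqR : aRT *m wT + aRI *m wI + aRR *m wR = 0.
Hypothesis eqI : aIT *m wT + aII *m wI + aIR *m wR = 0.
Hypothesis uRR : aRR \in unitmx.
Let S := invmx aRR.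
Let M := aII - aIR *m S *m aRI.
Let K := aIT - aIR *m S *m aRT.
Hypothesis uM : M \in unitmx.

Lemma block_elim_R : wR = - (S *m (aRT *m wT + aRI *m wI)).
Proof.
rewrite -[wR](mulKmx uRR) -mulmxN; congr (_ *m _).
by apply/eqP; rewrite -addr_eq0 addrC eqR.
Qed.

Lemma block_elim_I : wI = - (invmx M *m K) *m wT.
Proof.
rewrite -[wI](mulKmx uM) mulNmx -mulmxA -mulmxN; congr (_ *m _).
apply/eqP; rewrite -addr_eq0 addrC -eqI block_elim_R /M /K.
rewrite !(mulmxDl, mulmxDr, mulmxBl, mulmxN, mulNmx, mulmxA).
by rewrite opprD addrACA.
Qed.

Lemma block_elim_R_by_T : wR = S *m (- aRT + aRI *m invmx M *m K) *m wT.
Proof.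
rewrite block_elim_R block_elim_I.
by rewrite !(mulmxDl, mulmxDr, mulmxN, mulNmx, mulmxA, opprD, opprK).
Qed.

End BlockElimination.

Local Open Scope complex_scope.

Theorem mainTheorem4 (R : realType) (NT NI NR : nat)
  (Z : 'M[R[i]]_(NT + NI + NR))
  (ZT : 'M[R[i]]_NT) (ZI : 'M[R[i]]_NI) (ZR : 'M[R[i]]_NR) :
  Z \in unitmx ->
  is_diag_mx ZT -> ZT \in unitmx ->
  is_diag_mx ZR -> ZR \in unitmx ->
  ZI \in unitmx ->
  let Z0 := blkdiag3 ZT ZI ZR in
  let Y := invmx Z in
  let YI := invmx ZI in
  let YR := invmx ZR in
  let T := @idxT NT NI NR in
  let I := @idxI NT NI NR in
  let Rr := @idxR NT NI NR in
  (1%:M + Z0 *m invmx Z) \in unitmx ->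
  (YR + blk Rr Rr Y) \in unitmx ->
  block_mx (YI + blk I I Y) (blk I Rr Y) (blk Rr I Y) (YR + blk Rr Rr Y) \in unitmx ->
  let Zt := invmx (1%:M + Z0 *m invmx Z) in
  let S := invmx (YR + blk Rr Rr Y) in
  let M := YI + blk I I Y - blk I Rr Y *m S *m blk Rr I Y in
  [/\ blk T T Zt \in unitmx,
      M \in unitmx &
      blk Rr T Zt *m invmx (blk T T Zt) =
        S *m (- blk Rr T Y
              + blk Rr I Y *m invmx M *m (blk I T Y - blk I Rr Y *m S *m blk Rr T Y))].
Proof.
move=> _ _ uZT _ uZR uZI Z0 Y YI YR T I Rr uB uS uD Zt S M.
have uM : M \in unitmx by apply: schur_complement_unitmx.
have uZTI : block_mx ZT 0 0 ZI \in unitmx by rewrite block_diag_mx_unit uZT.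
have uZ0 : Z0 \in unitmx by rewrite block_diag_mx_unit uZTI.
have eY0 : invmx Z0 = blkdiag3 (invmx ZT) YI YR by rewrite !invmx_block_diag.
set A := invmx Z0 + Y.
have eA : 1%:M + Z0 *m Y = Z0 *m A by rewrite mulmxDr mulmxV.
have uA : A \in unitmx by move: uB; rewrite eA unitmx_mul => /andP[].
set W := invmx A; have AW : A *m W = 1%:M by rewrite mulmxV.
have eZt : Zt = W *m blkdiag3 (invmx ZT) YI YR by rewrite /Zt eA invmxM // eY0.
have eTT : blk T T Zt = blk T T W *m invmx ZT by rewrite eZt blk_mulmx_blkdiag3_T.
have eRT : blk Rr T Zt = blk Rr T W *m invmx ZT by rewrite eZt blk_mulmx_blkdiag3_T.
have eqR := congr1 (blk Rr T) AW.
rewrite /A eY0 blkRT_mulmx_blkdiag3D -blkdiag3_1 blkdiag3_RT in eqR.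
have eqI := congr1 (blk I T) AW.
rewrite /A eY0 blkIT_mulmx_blkdiag3D -blkdiag3_1 blkdiag3_IT in eqI.
have eWI := block_elim_I eqR eqI uS uM.
have eWR := block_elim_R_by_T eqR eqI uS uM.
have uWT : blk T T W \in unitmx.
  move: (congr1 (blk T T) AW); rewrite -blkdiag3_1 blkdiag3_TT blkM eWI eWR.
  by rewrite !mulmxA -!mulmxDl => /mulmx1_unit[].
split=> //; first by rewrite eTT unitmx_mul uWT unitmx_inv.
by rewrite eRT eTT invmxM ?unitmx_inv // invmxK mulmxA (mulmxKV uZT) eWR (mulmxK uWT).
Qed.
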